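(* Let $n\ge 7$ be any integer (not necessarily prime) with $n\equiv 1$ or $5\pmod 6$. Then: (R) there exists a one-factorization $\mathcal{R}$ of $K_{2n}$ on $\{0,\dots,2n-1\}$ such that, if $n\equiv5\pmod 6$, $\mathcal{R}=\{\mathcal{R}_{i,j}:1\le i\le\frac{2n-1}{3},1\le j\le3\}$ with $\mathcal{R}_{i,1}\cup\mathcal{R}_{i,2}\cup\mathcal{R}_{i,3}=\mathcal{A}_i\cup\mathcal{B}_i\cup\mathcal{C}_{i-1}$ for $1\le i\le\frac{n-1}{2}$ and $\mathcal{R}_{i,1}=\mathcal{C}_{3i-n-2}$, $\mathcal{R}_{i,2}=\mathcal{C}_{3i-n-1}$, $\mathcal{R}_{i,3}=\mathcal{C}_{3i-n}$ for $\frac{n+1}{2}\le i\le\frac{2n-1}{3}$; and, if $n\equiv1\pmod6$, $\mathcal{R}=\{\mathcal{R}_{i,j}:1\le i\le\frac{n-1}{2},1\le j\le3\}\cup\{\mathcal{C}_i:\frac{n-1}{2}\le i\le n-1\}$ with $\mathcal{R}_{i,1}\cup\mathcal{R}_{i,2}\cup\mathcal{R}_{i,3}=\mathcal{A}_i\cup\mathcal{B}_i\cup\mathcal{C}_{i-1}$ for $1\le i\le\frac{n-1}{2}$; (T) there exists a one-factorization $\mathcal{T}$ of $K_{2n}$ on $\{0,\dots,2n-1\}$ with exactly the same properties with $\mathcal{R}$ replaced by $\mathcal{T}$ and every $\mathcal{C}_k$ replaced by $\mathcal{D}_k$.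
   Context: For $1\le i\le \frac{n-1}{2}$: $\mathcal{A}_i=\{\{x,y\}: x,y\in\{0,\dots,n-1\},\ y-x\equiv i \pmod n\}$ and $\mathcal{B}_i=\{\{x,y\}: x,y\in\{n,\dots,2n-1\},\ y-x\equiv i\pmod n\}$. For $0\le i\le n-1$: $\mathcal{C}_i=\{\{x,y\}: 0\le x\le n-1,\ n\le y\le 2n-1,\ x+y\equiv i\pmod n\}$ and $\mathcal{D}_i=\{\{x,y\}: 0\le x\le n-1,\ n\le y\le 2n-1,\ y-x\equiv i\pmod n\}$. A one-factor of $K_{2n}$ is a perfect matching; a one-factorization is a partition of the edge set of $K_{2n}$ into $2n-1$ one-factors. *)

From mathcomp Require Import all_boot.
Set Implicit Arguments. Unset Strict Implicit. Unset Printing Implicit Defensive.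

Notation vert n := ('I_(2 * n)).
Notation edgeset n := {set {set vert n}}.

Definition Kedges (n : nat) : edgeset n := [set e : {set vert n} | #|e| == 2].

Definition Afam (n i : nat) : edgeset n :=
  [set e : {set vert n} | [exists x : vert n, exists y : vert n,
     [&& x < n, y < n, x != y, (y + n - x) %% n == i %% n & e == [set x; y]]]].

Definition Bfam (n i : nat) : edgeset n :=
  [set e : {set vert n} | [exists x : vert n, exists y : vert n,
     [&& n <= x, n <= y, x != y, (y + n - x) %% n == i %% n & e == [set x; y]]]].

Definition Cfam (n i : nat) : edgeset n :=
  [set e : {set vert n} | [exists x : vert n, exists y : vert n,
     [&& x < n, n <= y, (x + y) %% n == i %% n & e == [set x; y]]]].

Definition Dfam (n i : nat) : edgeset n :=
  [set e : {set vert n} | [exists x : vert n, exists y : vert n,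
     [&& x < n, n <= y, (y + n - x) %% n == i %% n & e == [set x; y]]]].

Definition one_factor (n : nat) (F : edgeset n) : Prop :=
  F \subset Kedges n /\ forall v : vert n, #|[set e in F | v \in e]| = 1.

Definition one_factorization (n : nat) (I : Type) (P : I -> Prop)
    (F : I -> edgeset n) : Prop :=
  [/\ forall k, P k -> one_factor (F k),
      forall k l, P k -> P l -> k <> l -> [disjoint F k & F l]
    & forall e, e \in Kedges n -> exists k, P k /\ e \in F k].

(* The property required of R (with X = C) or of T (with X = D). *)
Definition lemma6_prop (n : nat) (X : nat -> edgeset n)
    (R : nat -> nat -> edgeset n) : Prop :=
  (n %% 6 = 5 ->
     [/\ one_factorization
           (fun p : nat * nat => (1 <= p.1 <= (2 * n - 1) %/ 3) /\ (1 <= p.2 <= 3))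
           (fun p => R p.1 p.2),
         forall i, 1 <= i <= (n - 1) %/ 2 ->
           R i 1 :|: R i 2 :|: R i 3 = Afam n i :|: Bfam n i :|: X (i - 1)
       & forall i, (n + 1) %/ 2 <= i <= (2 * n - 1) %/ 3 ->
           [/\ R i 1 = X (3 * i - n - 2), R i 2 = X (3 * i - n - 1)
             & R i 3 = X (3 * i - n)]])
  /\
  (n %% 6 = 1 ->
     one_factorization
       (fun k : (nat * nat) + nat => match k with
          | inl p => (1 <= p.1 <= (n - 1) %/ 2) /\ (1 <= p.2 <= 3)
          | inr i => (n - 1) %/ 2 <= i <= n - 1 end)
       (fun k => match k with inl p => R p.1 p.2 | inr i => X i end)
     /\ forall i, 1 <= i <= (n - 1) %/ 2 ->
           R i 1 :|: R i 2 :|: R i 3 = Afam n i :|: Bfam n i :|: X (i - 1)).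

From mathcomp Require Import all_boot zify.
Set Implicit Arguments. Unset Strict Implicit. Unset Printing Implicit Defensive.

(* For 1 <= i <= (n-1)/2 the level A_i + B_i + X_(i-1) is a cubic graph: X_(i-1) is a perfect
   matching between the halves {0..n-1} and {n..2n-1} whose involution carries A_i onto B_i.
   Since 2i < n, the 2-regular circulant A_i has a proper 3-edge-colouring, which leaves exactly
   one colour missing at every vertex. Adding to each colour class the X_(i-1)-edges at the
   vertices missing that colour, and copying the top half to the bottom one through X_(i-1),
   splits the level into three one-factors. The levels together with the remaining X_k,
   (n-1)/2 <= k < n, partition the edges of K_2n; the rest is reindexing. *)

Lemma disjointP (T : finType) (A B : {set T}) :
  reflect (forall x, x \in A -> x \in B -> False) [disjoint A & B].
Proof.
rewrite disjoints_subset; apply: (iffP subsetP) => [sub x /sub | nAB x xA].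
  by rewrite inE => /negP.
by rewrite inE; apply/negP; exact: nAB.
Qed.

Lemma set2_inj (T : finType) (x y x' y' : T) :
  [set x; y] = [set x'; y'] -> (x = x' /\ y = y') \/ (x = y' /\ y = x').
Proof.
move=> E.
have /set2P x_in : x \in [set x'; y'] by rewrite -E set21.
have /set2P y_in : y \in [set x'; y'] by rewrite -E set22.
have /set2P x'_in : x' \in [set x; y] by rewrite E set21.
have /set2P y'_in : y' \in [set x; y] by rewrite E set22.
case: x_in => ex; case: y_in => ey; subst.
- by left; split=> //; case: y'_in.
- by left.
- by right.
- by right; split=> //; case: x'_in.
Qed.

Section MatchingOfInvolution.
Variable T : finType.

Definition matching_of (f : T -> T) : {set {set T}} := [set [set v; f v] | v : T].

Lemma matching_of_f f v : [set v; f v] \in matching_of f.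
Proof. exact: imset_f. Qed.

Lemma matching_ofP f e : e \in matching_of f -> exists v, e = [set v; f v].
Proof. by case/imsetP => v _ ->; exists v. Qed.

Lemma disjoint_matching_of f g :
  involutive g -> (forall v, f v != g v) -> [disjoint matching_of f & matching_of g].
Proof.
move=> g_inv fg; apply/disjointP => e /matching_ofP [v ->] /matching_ofP [w].
case/set2_inj => [[<- fv_gv] | [vw fv_w]]; first by move: (fg v); rewrite fv_gv eqxx.
by move: (fg v); rewrite fv_w vw g_inv eqxx.
Qed.

Variable f : T -> T.
Hypotheses (f_inv : involutive f) (f_fixfree : forall v, f v != v).

Lemma card_matching_edge v : #|[set v; f v]| = 2.
Proof. by rewrite cards2 eq_sym f_fixfree. Qed.

Lemma matching_edges_at v : [set e in matching_of f | v \in e] = [set [set v; f v]].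
Proof.
apply/setP => e; rewrite !inE; apply/andP/eqP => [[/matching_ofP [w ->]] | ->].
  by case/set2P => ->; rewrite // f_inv setUC.
by rewrite matching_of_f set21.
Qed.

End MatchingOfInvolution.

Lemma vert_size_gt0 n (v : vert n) : 0 < 2 * n.
Proof. exact: leq_ltn_trans (leq0n v) (ltn_ord v). Qed.

(* The reduction mod [2n] is junk: every lemma below assumes that [F] maps [[0, 2n)] into
   itself. *)
Definition vmap n (F : nat -> nat) (v : vert n) : vert n :=
  Ordinal (ltn_pmod (F v) (vert_size_gt0 v)).

Definition nat_matching n (F : nat -> nat) : edgeset n := matching_of (vmap F).

Section NatInvolution.
Variables (n : nat) (F : nat -> nat).
Hypothesis F_lt : forall v, v < 2 * n -> F v < 2 * n.

Lemma vmapE (v : vert n) : vmap F v = F v :> nat.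
Proof. by rewrite /= modn_small ?F_lt. Qed.

Lemma vmap_eq (v w : vert n) : w = F v :> nat -> w = vmap F v.
Proof. by move=> w_val; apply: ord_inj; rewrite w_val vmapE. Qed.

Hypothesis F_inv : forall v, v < 2 * n -> F (F v) = v.

Lemma vmap_inv : involutive (@vmap n F).
Proof. by move=> v; apply: ord_inj; rewrite !vmapE F_inv. Qed.

Lemma one_factor_nat_matching :
  (forall v, v < 2 * n -> F v != v) -> one_factor (nat_matching n F).
Proof.
move=> F_neq; have fixfree (v : vert n) : vmap F v != v.
  by rewrite -(inj_eq (@ord_inj _)) vmapE F_neq.
split=> [|v]; last by rewrite matching_edges_at ?cards1 //; exact: vmap_inv.
by apply/subsetP => e /matching_ofP [v ->]; rewrite inE card_matching_edge //; exact: vmap_inv.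
Qed.

End NatInvolution.

Lemma disjoint_nat_matching n (F G : nat -> nat) :
  (forall v, v < 2 * n -> F v < 2 * n) -> (forall v, v < 2 * n -> G v < 2 * n) ->
  (forall v, v < 2 * n -> G (G v) = v) -> (forall v, v < 2 * n -> F v != G v) ->
  [disjoint nat_matching n F & nat_matching n G].
Proof.
move=> F_lt G_lt G_inv FG; apply: disjoint_matching_of; first exact: vmap_inv.
by move=> v; rewrite -(inj_eq (@ord_inj _)) !vmapE ?FG.
Qed.

Lemma one_factorization_reindex n (I J : Type) (P : I -> Prop) (Q : J -> Prop)
    (F : I -> edgeset n) (G : J -> edgeset n) (phi : J -> I) :
  (forall q, Q q -> P (phi q) /\ G q = F (phi q)) ->
  (forall q q', Q q -> Q q' -> phi q = phi q' -> q = q') ->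
  (forall p, P p -> exists2 q, Q q & phi q = p) ->
  one_factorization P F -> one_factorization Q G.
Proof.
move=> phiP phi_inj phi_onto [F_one F_disj F_cover]; split.
- by move=> q /phiP [Pq ->]; exact: F_one.
- move=> q q' /[dup] Qq /phiP [Pq ->] /[dup] Qq' /phiP [Pq' ->] qq'.
  by apply: F_disj => // E; apply: qq'; exact: phi_inj.
- move=> e /F_cover [p [Pp e_in]]; have [q Qq phi_q] := phi_onto p Pp.
  by exists q; split=> //; have [_ ->] := phiP q Qq; rewrite phi_q.
Qed.

Lemma modn_sub_n a n : n <= a -> a < 2 * n -> a %% n = a - n.
Proof. by move=> ? ?; rewrite -{1}(subnK (_ : n <= a)) // modnDr modn_small //; lia. Qed.

Lemma modn_sub_2n a n : 2 * n <= a -> a < 3 * n -> a %% n = a - 2 * n.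
Proof.
move=> ? ?; rewrite -{1}(subnK (_ : 2 * n <= a)) // mul2n -addnn addnA !modnDr.
by rewrite modn_small //; lia.
Qed.

(* Decides linear goals about arguments in [0, 3n) modulo [n]: every innermost [a %% n] is
   rewritten to [a], [a - n] or [a - 2n], after a case split on [a < n] or [a < 2n] when the
   bounds in context do not decide it. [mod_lia] first clears the hypotheses mentioning [%%],
   so facts about residues have to be moved to the goal. *)
Ltac mod_elim n :=
  repeat match goal with
  | |- context [?a %% n] =>
      lazymatch a with context [_ %% n] => fail | _ => idtac end;
      first [ rewrite (@modn_small a n); last by lia
            | rewrite (@modn_sub_n a n); [ | by lia | by lia ]
            | rewrite (@modn_sub_2n a n); [ | by lia | by lia ]
            | assert_fails (have : n <= a by lia); case: (ltnP a n) => ?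
            | assert_fails (have : 2 * n <= a by lia); case: (ltnP a (2 * n)) => ? ]
  end.

Ltac mod_lia n :=
  repeat match goal with
  | |- context [@isSub.val_subdef _ _ _ _ ?x] =>
      change (@isSub.val_subdef _ _ _ _ x) with (nat_of_ord x)
  end;
  repeat match goal with H : context [_ %% _] |- _ => clear H end;
  mod_elim n; lia.

Definition differ_by n i a b : Prop := (b + n - a) %% n = i \/ (a + n - b) %% n = i.

Lemma mem_Afam n i (a b : vert n) :
  0 < i < n -> a < n -> b < n -> differ_by n i a b -> [set a; b] \in Afam n i.
Proof.
move=> i_bd a_top b_top ab; rewrite inE (modn_small (_ : i < n)); last by lia.
have a_neq_b : a != b by rewrite -(inj_eq val_inj); apply/eqP; case: ab; mod_lia n.
case: ab => [ab | ba].
  by apply/existsP; exists a; apply/existsP; exists b; rewrite a_top b_top a_neq_b ab !eqxx.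
apply/existsP; exists b; apply/existsP; exists a.
by rewrite a_top b_top eq_sym a_neq_b ba setUC !eqxx.
Qed.

Lemma mem_Bfam n i (a b : vert n) :
  0 < i < n -> n <= a -> n <= b -> differ_by n i a b -> [set a; b] \in Bfam n i.
Proof.
move=> i_bd a_bot b_bot ab; rewrite inE (modn_small (_ : i < n)); last by lia.
have := ltn_ord a; have := ltn_ord b => b_lt a_lt.
have a_neq_b : a != b by rewrite -(inj_eq val_inj); apply/eqP; case: ab; mod_lia n.
case: ab => [ab | ba].
  by apply/existsP; exists a; apply/existsP; exists b; rewrite a_bot b_bot a_neq_b ab !eqxx.
apply/existsP; exists b; apply/existsP; exists a.
by rewrite a_bot b_bot eq_sym a_neq_b ba setUC !eqxx.
Qed.

Lemma Afam_edgeP n i e : i < n -> e \in Afam n i ->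
  exists x y : vert n, [/\ x < n, y < n, (y + n - x) %% n = i & e = [set x; y]].
Proof.
move=> i_lt; rewrite inE => /existsP [x /existsP [y /and5P [x_top y_top _ /eqP xy /eqP ->]]].
by exists x, y; rewrite xy modn_small.
Qed.

Lemma Bfam_edgeP n i e : i < n -> e \in Bfam n i ->
  exists x y : vert n, [/\ n <= x, n <= y, (y + n - x) %% n = i & e = [set x; y]].
Proof.
move=> i_lt; rewrite inE => /existsP [x /existsP [y /and5P [x_bot y_bot _ /eqP xy /eqP ->]]].
by exists x, y; rewrite xy modn_small.
Qed.

Lemma Afam_top n i e (v : vert n) : e \in Afam n i -> v \in e -> v < n.
Proof. by rewrite inE => /existsP [x /existsP [y /and5P [? ? _ _ /eqP ->]]] /set2P [] ->. Qed.

Lemma Bfam_bot n i e (v : vert n) : e \in Bfam n i -> v \in e -> n <= v.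
Proof. by rewrite inE => /existsP [x /existsP [y /and5P [? ? _ _ /eqP ->]]] /set2P [] ->. Qed.

Lemma disjoint_Afam_Bfam n i i' : [disjoint Afam n i & Bfam n i'].
Proof.
apply/disjointP => e eA eB; move: (eA).
rewrite inE => /existsP [x /existsP [y /and5P [_ _ _ _ /eqP e_eq]]].
have x_in : x \in e by rewrite e_eq set21.
by have := Afam_top eA x_in; have := Bfam_bot eB x_in; lia.
Qed.

Lemma Afam_diff_unique n i i' e : 0 < i -> 0 < i' -> i + i' < n ->
  e \in Afam n i -> e \in Afam n i' -> i = i'.
Proof.
move=> i_gt0 i'_gt0 ii' /Afam_edgeP-/(_ (_ : i < n)) [|x [y [x_top y_top xy ->]]]; first by lia.
case/Afam_edgeP=> [|x' [y' [x'_top y'_top xy' /set2_inj [[ex ey] | [ex ey]]]]]; first by lia.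
  by rewrite -xy -xy' ex ey.
by move: xy xy'; rewrite ex ey; mod_lia n.
Qed.

Lemma Bfam_diff_unique n i i' e : 0 < i -> 0 < i' -> i + i' < n ->
  e \in Bfam n i -> e \in Bfam n i' -> i = i'.
Proof.
move=> i_gt0 i'_gt0 ii' /Bfam_edgeP-/(_ (_ : i < n)) [|x [y [x_bot y_bot xy ->]]]; first by lia.
case/Bfam_edgeP=> [|x' [y' [x'_bot y'_bot xy' /set2_inj [[ex ey] | [ex ey]]]]]; first by lia.
  by rewrite -xy -xy' ex ey.
have := ltn_ord x'; have := ltn_ord y'.
by move: xy xy'; rewrite ex ey; mod_lia n.
Qed.

(* The edge [{x, x + i mod n}] of the circulant [A_i] gets colour [circ_colour n i x]: colour 2
   for the [i] edges that wrap around, and otherwise the parity of [x %/ i], which alternates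
   along each path [x, x + i, x + 2i, ...]. *)
Definition circ_colour n i x : nat := if x < n - i then nat_of_bool (odd (x %/ i)) else 2.

Lemma circ_colour_lt n i x : circ_colour n i x < 3.
Proof. by rewrite /circ_colour; case: ifP => //; case: odd. Qed.

Lemma circ_colour_next n i x :
  0 < i -> 2 * i < n -> x < n -> circ_colour n i ((x + i) %% n) != circ_colour n i x.
Proof.
move=> i_gt0 i_small x_lt; rewrite /circ_colour.
case: (ltnP (x + i) n) => x_i.
  rewrite modn_small // (_ : x < n - i); last by lia.
  case: ifP => _; last by case: odd.
  by rewrite -{1}(mul1n i) addnC divnMDl // oddD /=; case: odd.
rewrite modn_sub_n; [ | by lia | by lia].
rewrite (_ : x + i - n < n - i); last by lia.
by rewrite (_ : x < n - i = false) //; lia.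
Qed.

Section Level.
Variables (n i : nat) (g : nat -> nat).
Hypotheses (i_gt0 : 0 < i) (i_small : 2 * i < n).
Hypotheses (g_lt : forall v, v < 2 * n -> g v < 2 * n)
  (g_top : forall v, v < n -> n <= g v)
  (g_bot : forall v, n <= v -> v < 2 * n -> g v < n)
  (g_inv : forall v, v < 2 * n -> g (g v) = v).

Definition top_partner j x :=
  if circ_colour n i x == j then (x + i) %% n
  else if circ_colour n i ((x + n - i) %% n) == j then (x + n - i) %% n
  else g x.

Definition partner j v := if v < n then top_partner j v else g (top_partner j (g v)).

Lemma shiftK x : x < n -> ((x + i) %% n + n - i) %% n = x.
Proof. by move=> ?; mod_lia n. Qed.

Lemma unshiftK x : x < n -> ((x + n - i) %% n + i) %% n = x.
Proof. by move=> ?; mod_lia n. Qed.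

Lemma circ_colour_prev x : x < n ->
  circ_colour n i x != circ_colour n i ((x + n - i) %% n).
Proof.
by move=> x_lt; rewrite -{1}(unshiftK x_lt) circ_colour_next // ltn_pmod //; lia.
Qed.

Lemma top_partner_cases j x : x < n -> top_partner j x < n \/ top_partner j x = g x.
Proof.
move=> x_lt; rewrite /top_partner.
by do 2 (case: eqP => _; first by left; rewrite ltn_pmod //; lia); right.
Qed.

Lemma top_partner_lt j x : x < n -> top_partner j x < 2 * n.
Proof.
by move=> x_lt; case: (top_partner_cases j x_lt) => [|->]; [lia | apply: g_lt; lia].
Qed.

Lemma top_partnerK j x : x < n -> top_partner j x < n -> top_partner j (top_partner j x) = x.
Proof.
move=> x_lt; rewrite /top_partner.
case: eqP => [col_x _ | _].
  by rewrite shiftK // -col_x (negbTE (circ_colour_next _ _ _)) ?eqxx.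
case: eqP => [col_x' _ | _]; first by rewrite col_x' eqxx unshiftK.
by have := g_top x_lt; lia.
Qed.

Lemma top_partner_neq j x : x < n -> top_partner j x != x.
Proof.
move=> x_lt; rewrite /top_partner.
case: (circ_colour n i x =P j) => _; first by apply/eqP; mod_lia n.
case: (circ_colour n i ((x + n - i) %% n) =P j) => _; first by apply/eqP; mod_lia n.
by have := g_top x_lt; lia.
Qed.

Lemma top_partner_missing x : x < n -> exists2 j, j < 3 & top_partner j x = g x.
Proof.
move=> x_lt; have := circ_colour_prev x_lt.
have := circ_colour_lt n i x; have := circ_colour_lt n i ((x + n - i) %% n).
rewrite /top_partner; move: (circ_colour n i x) (circ_colour n i _) => c c' c'_lt c_lt cc'.
by exists (3 - c - c'); [lia | do 2 (case: eqP; first by lia)].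
Qed.

Lemma top_partner_colour_neq j j' x : x < n -> j < 3 -> j' < 3 -> j != j' ->
  top_partner j x != top_partner j' x.
Proof.
move=> x_lt j_lt j'_lt jj'; have n_gt0 : 0 < n by lia.
have := circ_colour_prev x_lt; have := g_top x_lt.
have := circ_colour_lt n i x; have := circ_colour_lt n i ((x + n - i) %% n).
have := ltn_pmod (x + i) n_gt0; have := ltn_pmod (x + n - i) n_gt0.
have : (x + i) %% n <> (x + n - i) %% n by mod_lia n.
rewrite /top_partner; move: (circ_colour n i x) (circ_colour n i ((x + n - i) %% n)).
move: ((x + i) %% n) ((x + n - i) %% n) => p q c c' pq q_lt p_lt c'_lt c_lt gx cc'.
apply/eqP; case: (c =P j) => ? /=; case: (c =P j') => ? /=; case: (c' =P j) => ? /=;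
  case: (c' =P j') => ? /=; lia.
Qed.

Lemma partner_top j v : v < n -> partner j v = top_partner j v.
Proof. by rewrite /partner => ->. Qed.

Lemma partner_bot j v : n <= v -> partner j v = g (top_partner j (g v)).
Proof. by rewrite /partner => /leq_gtF ->. Qed.

Lemma partner_lt j v : v < 2 * n -> partner j v < 2 * n.
Proof.
move=> v_lt; rewrite /partner; case: (ltnP v n) => v_n; first exact: top_partner_lt.
by apply: g_lt; apply: top_partner_lt; exact: g_bot.
Qed.

Lemma partnerK j v : v < 2 * n -> partner j (partner j v) = v.
Proof.
move=> v_lt; case: (ltnP v n) => v_n.
  rewrite (partner_top j v_n); case: (top_partner_cases j v_n) => [t_lt | t_eq].
    by rewrite partner_top // top_partnerK.
  by rewrite t_eq partner_bot ?g_top // g_inv ?t_eq ?g_inv //; lia.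
have gv_top := g_bot v_n v_lt.
rewrite (partner_bot j v_n); case: (top_partner_cases j gv_top) => [t_lt | t_eq].
  by rewrite partner_bot ?g_top // g_inv ?top_partner_lt // top_partnerK // g_inv.
by rewrite t_eq g_inv ?g_lt // partner_top // t_eq !g_inv.
Qed.

Lemma partner_neq j v : v < 2 * n -> partner j v != v.
Proof.
move=> v_lt; case: (ltnP v n) => v_n; first by rewrite partner_top // top_partner_neq.
have gv_top := g_bot v_n v_lt.
rewrite partner_bot //; apply: contraNneq (top_partner_neq j gv_top) => E.
by rewrite -{2}E g_inv // top_partner_lt.
Qed.

Lemma partner_colour_neq j j' v : v < 2 * n -> j < 3 -> j' < 3 -> j != j' ->
  partner j v != partner j' v.
Proof.
move=> v_lt j_lt j'_lt jj'; case: (ltnP v n) => v_n.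
  by rewrite !partner_top //; apply: top_partner_colour_neq.
have gv_top := g_bot v_n v_lt.
rewrite !partner_bot //; apply: contraNneq (top_partner_colour_neq gv_top j_lt j'_lt jj').
by move/(congr1 g); rewrite !g_inv ?top_partner_lt // => ->.
Qed.

Hypothesis g_maps_A_into_B : forall z, z < n -> differ_by n i (g z) (g ((z + i) %% n)).
Hypothesis g_maps_A_onto_B : forall a b, n <= a -> a < 2 * n -> n <= b -> b < 2 * n ->
  (b + n - a) %% n = i -> exists2 z, z < n &
    (a = g ((z + i) %% n) /\ b = g z) \/ (a = g z /\ b = g ((z + i) %% n)).

Definition level_graph : edgeset n := Afam n i :|: Bfam n i :|: nat_matching n g.

Definition level_factor j : edgeset n := nat_matching n (partner j).

Lemma one_factor_level_factor j : one_factor (level_factor j).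
Proof.
apply: one_factor_nat_matching => v v_lt;
  [exact: partner_lt | exact: partnerK | exact: partner_neq].
Qed.

Lemma disjoint_level_factor j j' : j < 3 -> j' < 3 -> j != j' ->
  [disjoint level_factor j & level_factor j'].
Proof.
move=> j_lt j'_lt jj'; apply: disjoint_nat_matching => v v_lt;
  by [apply: partner_lt | apply: partnerK | apply: partner_colour_neq].
Qed.

Lemma level_factor_sub j : level_factor j \subset level_graph.
Proof.
have i_bd : 0 < i < n by lia.
apply/subsetP => _ /matching_ofP [v ->]; have := vmapE (partner_lt j) v.
move: (vmap _ v) => w w_val; have v_lt := ltn_ord v.
case: (ltnP v n) => v_n.
  move: w_val; rewrite partner_top // /top_partner.
  case: (circ_colour n i v =P j) => _ w_val.
    rewrite !in_setU mem_Afam ?w_val ?ltn_pmod //; by [lia | left; mod_lia n].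
  move: w_val; case: (circ_colour n i ((v + n - i) %% n) =P j) => _ w_val.
    rewrite !in_setU mem_Afam ?w_val ?ltn_pmod //; by [lia | right; mod_lia n].
  by rewrite !in_setU (vmap_eq g_lt w_val) matching_of_f !orbT.
have gv_top := g_bot v_n v_lt; have v_eq := g_inv v_lt.
move: w_val; rewrite partner_bot // /top_partner.
move: (g v) gv_top v_eq => u u_top v_eq.
case: (circ_colour n i u =P j) => _ w_val.
  rewrite !in_setU mem_Bfam ?orbT ?w_val ?g_top ?ltn_pmod //; try lia.
  by rewrite -v_eq; apply: g_maps_A_into_B.
move: w_val; case: (circ_colour n i ((u + n - i) %% n) =P j) => _ w_val.
  have u'_top : (u + n - i) %% n < n by rewrite ltn_pmod //; lia.
  rewrite setUC !in_setU mem_Bfam ?orbT ?w_val ?g_top //; try lia.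
  by rewrite -v_eq -{2}(unshiftK u_top); apply: g_maps_A_into_B.
by rewrite v_eq in w_val; rewrite !in_setU (vmap_eq g_lt w_val) matching_of_f !orbT.
Qed.

Lemma mem_level_factors j (v w : vert n) : j < 3 -> w = partner j v :> nat ->
  [set v; w] \in level_factor 0 :|: level_factor 1 :|: level_factor 2.
Proof.
move=> j_lt w_val; rewrite (vmap_eq (partner_lt j) w_val).
by rewrite !in_setU; case: j j_lt {w_val} => [|[|[|]]] // _; rewrite matching_of_f ?orbT.
Qed.

Lemma level_graph_sub : level_graph \subset level_factor 0 :|: level_factor 1 :|: level_factor 2.
Proof.
have i_lt : i < n by lia.
apply/subsetP => e /setUP [/setUP [/(Afam_edgeP i_lt) | /(Bfam_edgeP i_lt)] | ].
- case=> x [y [x_top y_top xy ->]].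
  apply: (mem_level_factors (circ_colour_lt n i x)).
  by rewrite partner_top // /top_partner eqxx; move: xy; mod_lia n.
- case=> x [y [x_bot y_bot xy ->]].
  have [z z_top [[ex ey] | [ex ey]]] :=
    g_maps_A_onto_B x_bot (ltn_ord x) y_bot (ltn_ord y) xy.
    rewrite setUC; apply: (mem_level_factors (circ_colour_lt n i z)).
    by rewrite ex partner_bot // ey g_inv /top_partner ?eqxx //; lia.
  apply: (mem_level_factors (circ_colour_lt n i z)).
  by rewrite ey partner_bot // ex g_inv /top_partner ?eqxx //; lia.
- case/matching_ofP => v ->; have v_lt := ltn_ord v; have gv_lt := g_lt v_lt.
  case: (ltnP v n) => v_n.
    have [j j_lt E] := top_partner_missing v_n.
    by apply: (mem_level_factors j_lt); rewrite vmapE // partner_top // E.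
  have gv_top := g_bot v_n v_lt; have [j j_lt E] := top_partner_missing gv_top.
  rewrite setUC; apply: (mem_level_factors j_lt).
  by rewrite vmapE // partner_top // E g_inv.
Qed.

Lemma level_factors_cover :
  level_factor 0 :|: level_factor 1 :|: level_factor 2 = level_graph.
Proof.
apply/eqP; rewrite eqEsubset level_graph_sub andbT.
by rewrite !subUset !level_factor_sub.
Qed.

End Level.

Section CrossMatching.
Variables (n : nat) (F : nat -> nat).
Hypotheses (F_lt : forall v, v < 2 * n -> F v < 2 * n)
  (F_top : forall v, v < n -> n <= F v)
  (F_bot : forall v, n <= v -> v < 2 * n -> F v < n)
  (F_inv : forall v, v < 2 * n -> F (F v) = v).

Lemma cross_set_matching (P : nat -> nat -> bool) :
  (forall x y, x < n -> n <= y -> y < 2 * n -> P x y = (y == F x)) ->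
  [set e : {set vert n} | [exists x : vert n, exists y : vert n,
     [&& x < n, n <= y, P x y & e == [set x; y]]]] = nat_matching n F.
Proof.
move=> PF; apply/setP => e; rewrite inE; apply/idP/idP.
  case/existsP => x /existsP [y /and4P [x_top y_bot Pxy /eqP ->]].
  rewrite PF // in Pxy.
  by rewrite (vmap_eq F_lt (eqP Pxy)) matching_of_f.
case/matching_ofP => v ->; have v_lt := ltn_ord v; have Fv := vmapE F_lt v.
apply/existsP; case: (ltnP v n) => v_n.
  exists v; apply/existsP; exists (vmap F v).
  by rewrite v_n Fv F_top // PF ?Fv ?F_lt ?F_top // !eqxx.
exists (vmap F v); apply/existsP; exists v.
by rewrite Fv F_bot // v_n PF ?Fv ?F_bot // F_inv // setUC !eqxx.
Qed.

End CrossMatching.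

(* [X_k] is [C_k] or [D_k]: the top vertex [x] is matched to the bottom vertex [n + y] with
   [y = k - x] resp. [y = x + k] modulo [n]. *)
Definition C_partner n k v := if v < n then n + (k + n - v) %% n else (k + 2 * n - v) %% n.
Definition D_partner n k v := if v < n then n + (v + k) %% n else (v - k) %% n.

Section CrossPartners.
Variables n k : nat.
Hypothesis k_lt : k < n.

Lemma C_partner_lt v : v < 2 * n -> C_partner n k v < 2 * n.
Proof. by rewrite /C_partner; case: ifP; mod_lia n. Qed.
Lemma C_partner_top v : v < n -> n <= C_partner n k v.
Proof. by rewrite /C_partner; case: ifP; mod_lia n. Qed.
Lemma C_partner_bot v : n <= v -> v < 2 * n -> C_partner n k v < n.
Proof. by rewrite /C_partner; case: ifP; mod_lia n. Qed.
Lemma C_partnerK v : v < 2 * n -> C_partner n k (C_partner n k v) = v.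
Proof.
move=> v_lt; rewrite {2}/C_partner; case: ifP => v_n; rewrite /C_partner.
  by rewrite (_ : n + (k + n - v) %% n < n = false); mod_lia n.
by rewrite ltn_pmod; mod_lia n.
Qed.
Lemma D_partner_lt v : v < 2 * n -> D_partner n k v < 2 * n.
Proof. by rewrite /D_partner; case: ifP; mod_lia n. Qed.
Lemma D_partner_top v : v < n -> n <= D_partner n k v.
Proof. by rewrite /D_partner; case: ifP; mod_lia n. Qed.
Lemma D_partner_bot v : n <= v -> v < 2 * n -> D_partner n k v < n.
Proof. by rewrite /D_partner; case: ifP; mod_lia n. Qed.
Lemma D_partnerK v : v < 2 * n -> D_partner n k (D_partner n k v) = v.
Proof.
move=> v_lt; rewrite {2}/D_partner; case: ifP => v_n; rewrite /D_partner.
  by rewrite (_ : n + (v + k) %% n < n = false); mod_lia n.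
by rewrite ltn_pmod; mod_lia n.
Qed.

Lemma Cfam_matching : Cfam n k = nat_matching n (C_partner n k).
Proof.
apply: (cross_set_matching C_partner_lt C_partner_top C_partner_bot C_partnerK
  (P := fun x y => (x + y) %% n == k %% n)) => x y x_top y_bot y_lt /=.
by rewrite /C_partner x_top (modn_small k_lt); apply/eqP/eqP; mod_lia n.
Qed.

Lemma Dfam_matching : Dfam n k = nat_matching n (D_partner n k).
Proof.
apply: (cross_set_matching D_partner_lt D_partner_top D_partner_bot D_partnerK
  (P := fun x y => (y + n - x) %% n == k %% n)) => x y x_top y_bot y_lt /=.
by rewrite /D_partner x_top (modn_small k_lt); apply/eqP/eqP; mod_lia n.
Qed.

End CrossPartners.

Lemma C_partner_neq n k k' v : k < n -> k' < n -> k != k' -> v < 2 * n ->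
  C_partner n k v != C_partner n k' v.
Proof. by move=> *; apply/eqP; rewrite /C_partner; case: ifP; mod_lia n. Qed.

Lemma D_partner_neq n k k' v : k < n -> k' < n -> k != k' -> v < 2 * n ->
  D_partner n k v != D_partner n k' v.
Proof. by move=> *; apply/eqP; rewrite /D_partner; case: ifP; mod_lia n. Qed.

Lemma Cfam_complete n (a b : vert n) :
  a < n -> n <= b -> exists2 k, k < n & [set a; b] \in Cfam n k.
Proof.
move=> a_top b_bot; exists ((a + b) %% n); first by rewrite ltn_pmod //; lia.
rewrite inE; apply/existsP; exists a; apply/existsP; exists b.
by rewrite a_top b_bot modn_mod !eqxx.
Qed.

Lemma Dfam_complete n (a b : vert n) :
  a < n -> n <= b -> exists2 k, k < n & [set a; b] \in Dfam n k.
Proof.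
move=> a_top b_bot; exists ((b + n - a) %% n); first by rewrite ltn_pmod //; lia.
rewrite inE; apply/existsP; exists a; apply/existsP; exists b.
by rewrite a_top b_bot modn_mod !eqxx.
Qed.

Section CrossShift.
Variables n k i : nat.
Hypotheses (k_lt : k < n) (i_lt : i < n).

Lemma C_partner_shift z : z < n -> differ_by n i (C_partner n k z) (C_partner n k ((z + i) %% n)).
Proof. by move=> z_lt; right; rewrite /C_partner z_lt ltn_pmod; mod_lia n. Qed.

Lemma D_partner_shift z : z < n -> differ_by n i (D_partner n k z) (D_partner n k ((z + i) %% n)).
Proof. by move=> z_lt; left; rewrite /D_partner z_lt ltn_pmod; mod_lia n. Qed.

Lemma C_partner_shift_onto a b : n <= a -> a < 2 * n -> n <= b -> b < 2 * n ->
  (b + n - a) %% n = i -> exists2 z, z < n &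
    (a = C_partner n k ((z + i) %% n) /\ b = C_partner n k z) \/
    (a = C_partner n k z /\ b = C_partner n k ((z + i) %% n)).
Proof.
move=> a_bot a_lt b_bot b_lt ab; set z := C_partner n k b.
have z_top : z < n by apply: C_partner_bot.
have z_val : z = (k + 2 * n - b) %% n by rewrite /z /C_partner ltnNge b_bot.
exists z => //; left; rewrite /C_partner z_top ltn_pmod; last by lia.
by rewrite z_val; move: ab; mod_lia n.
Qed.

Lemma D_partner_shift_onto a b : n <= a -> a < 2 * n -> n <= b -> b < 2 * n ->
  (b + n - a) %% n = i -> exists2 z, z < n &
    (a = D_partner n k ((z + i) %% n) /\ b = D_partner n k z) \/
    (a = D_partner n k z /\ b = D_partner n k ((z + i) %% n)).
Proof.
move=> a_bot a_lt b_bot b_lt ab; set z := D_partner n k a.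
have z_top : z < n by apply: D_partner_bot.
have z_val : z = (a - k) %% n by rewrite /z /D_partner ltnNge a_bot.
exists z => //; right; rewrite /D_partner z_top ltn_pmod; last by lia.
by rewrite z_val; move: ab; mod_lia n.
Qed.

End CrossShift.

(* [X_0, ..., X_(n-1)] split the edges between the two halves into perfect matchings, and each
   involution [g k] carries the circulant [A_i] onto [B_i]: this is all the construction needs
   of the families [C] and [D]. *)
Record cross_family n (g : nat -> nat -> nat) (X : nat -> edgeset n) : Prop := CrossFamily {
  cross_lt : forall k, k < n -> forall v, v < 2 * n -> g k v < 2 * n;
  cross_top : forall k, k < n -> forall v, v < n -> n <= g k v;
  cross_bot : forall k, k < n -> forall v, n <= v -> v < 2 * n -> g k v < n;
  crossK : forall k, k < n -> forall v, v < 2 * n -> g k (g k v) = v;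
  cross_neq : forall k k', k < n -> k' < n -> k != k' -> forall v, v < 2 * n -> g k v != g k' v;
  cross_matching : forall k, k < n -> X k = nat_matching n (g k);
  cross_complete : forall a b : vert n, a < n -> n <= b -> exists2 k, k < n & [set a; b] \in X k;
  cross_shift : forall k i, k < n -> i < n -> forall z, z < n ->
    differ_by n i (g k z) (g k ((z + i) %% n));
  cross_shift_onto : forall k i, k < n -> i < n -> forall a b,
    n <= a -> a < 2 * n -> n <= b -> b < 2 * n -> (b + n - a) %% n = i -> exists2 z, z < n &
      (a = g k ((z + i) %% n) /\ b = g k z) \/ (a = g k z /\ b = g k ((z + i) %% n))
}.
Arguments cross_lt {n g X} _ {k} _ _.
Arguments cross_top {n g X} _ {k} _ _.
Arguments cross_bot {n g X} _ {k} _ _.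
Arguments crossK {n g X} _ {k} _ _.
Arguments cross_neq {n g X} _ {k k'} _ _ _ _.
Arguments cross_shift {n g X} _ {k i} _ _ _.
Arguments cross_shift_onto {n g X} _ {k i} _ _ _ _.

Lemma Cfam_cross_family n : cross_family (C_partner n) (Cfam n).
Proof.
split=> *; by [ apply: C_partner_lt | apply: C_partner_top | apply: C_partner_bot
  | apply: C_partnerK | apply: C_partner_neq | apply: Cfam_matching | apply: Cfam_complete
  | apply: C_partner_shift | apply: C_partner_shift_onto].
Qed.

Lemma Dfam_cross_family n : cross_family (D_partner n) (Dfam n).
Proof.
split=> *; by [ apply: D_partner_lt | apply: D_partner_top | apply: D_partner_bot
  | apply: D_partnerK | apply: D_partner_neq | apply: Dfam_matching | apply: Dfam_complete
  | apply: D_partner_shift | apply: D_partner_shift_onto].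
Qed.

Section Assembly.
Variables (n : nat) (g : nat -> nat -> nat) (X : nat -> edgeset n).
Hypotheses (n_odd : odd n) (hX : cross_family g X).

Definition factor i j := level_factor n i (g (i - 1)) (j - 1).
Definition level i := Afam n i :|: Bfam n i :|: X (i - 1).

Section OneLevel.
Variable i : nat.
Hypothesis i_level : 1 <= i <= (n - 1) %/ 2.

Let i_gt0 : 0 < i. Proof. by lia. Qed.
Let i_small : 2 * i < n. Proof. by lia. Qed.
Let k_lt : i - 1 < n. Proof. by lia. Qed.
Let i_lt : i < n. Proof. by lia. Qed.
Let gk_lt := cross_lt hX k_lt.
Let gk_top := cross_top hX k_lt.
Let gk_bot := cross_bot hX k_lt.
Let gkK := crossK hX k_lt.

Lemma factor_union : factor i 1 :|: factor i 2 :|: factor i 3 = level i.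
Proof.
rewrite /level (cross_matching hX k_lt); apply: level_factors_cover => //.
- exact: (cross_shift hX k_lt i_lt).
- exact: (cross_shift_onto hX k_lt i_lt).
Qed.

Lemma one_factor_factor j : one_factor (factor i j).
Proof. exact: one_factor_level_factor. Qed.

Lemma disjoint_factor j j' : 1 <= j <= 3 -> 1 <= j' <= 3 -> j != j' ->
  [disjoint factor i j & factor i j'].
Proof. by move=> j_bd j'_bd jj'; apply: disjoint_level_factor => //; lia. Qed.

Lemma factor_sub_level j : 1 <= j <= 3 -> factor i j \subset level i.
Proof.
move=> j_bd; apply/subsetP => e; rewrite -factor_union !in_setU.
by case: j j_bd => [|[|[|[|]]]] // _ ->; rewrite ?orbT.
Qed.

End OneLevel.

Lemma one_factor_X k : k < n -> one_factor (X k).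
Proof.
move=> k_lt; rewrite (cross_matching hX k_lt).
apply: one_factor_nat_matching; [exact: (cross_lt hX k_lt) | exact: (crossK hX k_lt) |].
by move=> v v_lt; apply/eqP => E; case: (ltnP v n) => v_n;
  [have := cross_top hX k_lt _ v_n | have := cross_bot hX k_lt _ v_n v_lt]; rewrite E; lia.
Qed.

Lemma cross_edge_ends k e : k < n -> e \in X k ->
  exists v w : vert n, [/\ v \in e, w \in e, v < n & n <= w].
Proof.
move=> k_lt; rewrite (cross_matching hX k_lt) => /matching_ofP [v ->].
have v_lt := ltn_ord v; have gv := vmapE (cross_lt hX k_lt) v.
case: (ltnP v n) => v_n.
  exists v, (vmap (g k) v); rewrite set21 set22 gv.
  by split=> //; exact: (cross_top hX k_lt _ v_n).
exists (vmap (g k) v), v; rewrite set21 set22 gv.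
by split=> //; exact: (cross_bot hX k_lt _ v_n v_lt).
Qed.

Lemma disjoint_Afam_X i k : k < n -> [disjoint Afam n i & X k].
Proof.
move=> k_lt; apply/disjointP => e eA /(cross_edge_ends k_lt) [v [w [_ w_in _ w_bot]]].
by have := Afam_top eA w_in; lia.
Qed.

Lemma disjoint_Bfam_X i k : k < n -> [disjoint Bfam n i & X k].
Proof.
move=> k_lt; apply/disjointP => e eB /(cross_edge_ends k_lt) [v [w [v_in _ v_top _]]].
by have := Bfam_bot eB v_in; lia.
Qed.

Lemma disjoint_X k k' : k < n -> k' < n -> k != k' -> [disjoint X k & X k'].
Proof.
move=> k_lt k'_lt kk'; rewrite !(cross_matching hX) //.
apply: disjoint_nat_matching; [exact: (cross_lt hX k_lt) | exact: (cross_lt hX k'_lt)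
  | exact: (crossK hX k'_lt) | exact: (cross_neq hX k_lt k'_lt kk')].
Qed.

Lemma disjoint_level i i' : 1 <= i <= (n - 1) %/ 2 -> 1 <= i' <= (n - 1) %/ 2 -> i != i' ->
  [disjoint level i & level i'].
Proof.
move=> i_bd i'_bd ii'; have k_lt : i - 1 < n by lia.
have k'_lt : i' - 1 < n by lia.
apply/disjointP => e /setUP [/setUP [eA | eB] | eX] /setUP [/setUP [eA' | eB'] | eX'].
- by move/eqP: ii'; apply; apply: (Afam_diff_unique _ _ _ eA eA'); lia.
- by rewrite (disjointFr (disjoint_Afam_Bfam n i i') eA) in eB'.
- by rewrite (disjointFr (disjoint_Afam_X i k'_lt) eA) in eX'.
- by rewrite (disjointFr (disjoint_Afam_Bfam n i' i) eA') in eB.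
- by move/eqP: ii'; apply; apply: (Bfam_diff_unique _ _ _ eB eB'); lia.
- by rewrite (disjointFr (disjoint_Bfam_X i k'_lt) eB) in eX'.
- by rewrite (disjointFr (disjoint_Afam_X i' k_lt) eA') in eX.
- by rewrite (disjointFr (disjoint_Bfam_X i' k_lt) eB') in eX.
- by rewrite (disjointFr (disjoint_X k_lt k'_lt (_ : i - 1 != i' - 1)) eX) in eX'; lia.
Qed.

Lemma disjoint_level_X i k : 1 <= i <= (n - 1) %/ 2 -> k < n -> k != i - 1 ->
  [disjoint level i & X k].
Proof.
move=> i_bd k_lt ki; have i_lt : i - 1 < n by lia.
have ik : i - 1 != k by rewrite eq_sym.
apply/disjointP => e /setUP [/setUP [eA | eB] | eX] eX'.
- by rewrite (disjointFr (disjoint_Afam_X i k_lt) eA) in eX'.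
- by rewrite (disjointFr (disjoint_Bfam_X i k_lt) eB) in eX'.
- by rewrite (disjointFr (disjoint_X i_lt k_lt ik) eX) in eX'.
Qed.

Lemma top_edge_level (a b : vert n) : a < b -> b < n ->
  exists2 i, 1 <= i <= (n - 1) %/ 2 & [set a; b] \in Afam n i.
Proof.
move=> ab b_top; case: (leqP (b - a) ((n - 1) %/ 2)) => d_small.
  by exists (b - a); [lia | apply: mem_Afam; [lia | lia | lia | left; mod_lia n]].
by exists (n - (b - a)); [lia | apply: mem_Afam; [lia | lia | lia | right; mod_lia n]].
Qed.

Lemma bottom_edge_level (a b : vert n) : a < b -> n <= a ->
  exists2 i, 1 <= i <= (n - 1) %/ 2 & [set a; b] \in Bfam n i.
Proof.
move=> ab a_bot; have b_lt := ltn_ord b.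
case: (leqP (b - a) ((n - 1) %/ 2)) => d_small.
  by exists (b - a); [lia | apply: mem_Bfam; [lia | lia | lia | left; mod_lia n]].
by exists (n - (b - a)); [lia | apply: mem_Bfam; [lia | lia | lia | right; mod_lia n]].
Qed.

Lemma level_or_X_cover e : e \in Kedges n ->
  (exists2 i, 1 <= i <= (n - 1) %/ 2 & e \in level i) \/
  (exists2 k, (n - 1) %/ 2 <= k < n & e \in X k).
Proof.
rewrite inE => /cards2P [a [b [ab ->]]].
wlog a_lt_b : a b ab / a < b.
  move=> IH; case: (ltngtP a b) => [|b_lt_a|/ord_inj a_eq_b]; first exact: IH.
    by rewrite setUC; apply: IH; rewrite // eq_sym.
  by rewrite a_eq_b eqxx in ab.
case: (ltnP b n) => [b_top | b_bot].
  have [i i_bd e_in] := top_edge_level a_lt_b b_top.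
  by left; exists i; rewrite // !in_setU e_in.
case: (ltnP a n) => [a_top | a_bot].
  have [k k_lt e_in] := cross_complete hX a_top b_bot.
  case: (ltnP k ((n - 1) %/ 2)) => k_small; last by right; exists k; rewrite ?k_small.
  by left; exists k.+1; [lia | rewrite /level !in_setU subn1 /= e_in orbT].
have [i i_bd e_in] := bottom_edge_level a_lt_b a_bot.
by left; exists i; rewrite // !in_setU e_in orbT.
Qed.

Definition factor_or_X (d : (nat * nat) + nat) : edgeset n :=
  match d with inl p => factor p.1 p.2 | inr k => X k end.

Definition factor_index (d : (nat * nat) + nat) : Prop :=
  match d with
  | inl p => (1 <= p.1 <= (n - 1) %/ 2) /\ (1 <= p.2 <= 3)
  | inr k => (n - 1) %/ 2 <= k <= n - 1
  end.

Theorem one_factorization_factor_or_X : one_factorization factor_index factor_or_X.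
Proof.
split.
- case=> [[i j] [i_bd _] | k /= k_bd]; [exact: one_factor_factor | apply: one_factor_X; lia].
- case=> [[i j] | k]; case=> [[i' j'] | k'] /=.
  + move=> [i_bd j_bd] [i'_bd j'_bd] neq; have [ii' | ii'] := eqVneq i i'.
      subst i'; apply: disjoint_factor => //.
      by apply/eqP => jj'; apply: neq; rewrite jj'.
    apply: disjointWl (factor_sub_level i_bd j_bd) _.
    exact: disjointWr (factor_sub_level i'_bd j'_bd) (disjoint_level i_bd i'_bd ii').
  + move=> [i_bd j_bd] k'_bd _; apply: disjointWl (factor_sub_level i_bd j_bd) _.
    by apply: disjoint_level_X => //; lia.
  + move=> k_bd [i'_bd j'_bd] _; rewrite disjoint_sym.
    apply: disjointWl (factor_sub_level i'_bd j'_bd) _.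
    by apply: disjoint_level_X => //; lia.
  + move=> k_bd k'_bd neq; apply: disjoint_X; [lia | lia |].
    by apply/eqP => kk'; apply: neq; rewrite kk'.
- move=> e /level_or_X_cover [[i i_bd] | [k k_bd e_in]]; last by exists (inr k); split=> //=; lia.
  rewrite -factor_union // !in_setU -orbA => /or3P [e_in | e_in | e_in].
  + by exists (inl (i, 1)).
  + by exists (inl (i, 2)).
  + by exists (inl (i, 3)).
Qed.

Definition grid_factor i j :=
  if i <= (n - 1) %/ 2 then factor i j else X (3 * i - n - 2 + (j - 1)).

Lemma lemma6_prop_grid_factor : lemma6_prop X grid_factor.
Proof.
have grid_level i j : i <= (n - 1) %/ 2 -> grid_factor i j = factor i j.
  by rewrite /grid_factor => ->.
have grid_union i : 1 <= i <= (n - 1) %/ 2 ->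
    grid_factor i 1 :|: grid_factor i 2 :|: grid_factor i 3 = Afam n i :|: Bfam n i :|: X (i - 1).
  by move=> i_bd; rewrite !grid_level ?factor_union //; lia.
split=> [n_5 | n_1]; last first.
  split=> //; apply: (one_factorization_reindex (phi := id) _ _ _ one_factorization_factor_or_X).
  - case=> [[i j] /= [i_bd j_bd] | k k_bd] /=; last by [].
    by split; [split | rewrite grid_level //; lia].
  - by [].
  - by move=> p p_ok; exists p.
split; [ | exact: grid_union | move=> i i_bd]; last first.
  have i_big : (i <= (n - 1) %/ 2) = false by lia.
  by rewrite /grid_factor i_big; split; congr X; lia.
pose phi (p : nat * nat) :=
  if p.1 <= (n - 1) %/ 2 then inl p else inr (3 * p.1 - n - 2 + (p.2 - 1)).
apply: (one_factorization_reindex (phi := phi) _ _ _ one_factorization_factor_or_X).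
- case=> i j /= [i_bd j_bd]; rewrite /phi /grid_factor /=.
  by case: ifP => i_small /=; split=> //; lia.
- case=> i j [i' j'] /= [i_bd j_bd] [i'_bd j'_bd]; rewrite /phi /=.
  case: ifP => i_small; case: ifP => i'_small //; first by case=> -> ->.
  by case=> E; congr pair; lia.
- case=> [[i j] /= [i_bd j_bd] | k /= k_bd]; first by exists (i, j); rewrite /phi /= ?ifT //; lia.
  exists ((k + n + 2) %/ 3, (k + n + 2) %% 3 + 1); rewrite /phi /=; first by lia.
  by rewrite ifN; [congr inr | ]; lia.
Qed.

End Assembly.

Theorem lemma6 (n : nat) :
  7 <= n -> (n %% 6 = 1 \/ n %% 6 = 5) ->
  (exists R : nat -> nat -> edgeset n, lemma6_prop (Cfam n) R) /\
  (exists T : nat -> nat -> edgeset n, lemma6_prop (Dfam n) T).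
Proof.
move=> _ n_mod6; have n_odd : odd n by case: n_mod6; lia.
split.
- exists (grid_factor (C_partner n) (Cfam n)).
  exact: lemma6_prop_grid_factor n_odd (Cfam_cross_family n).
- exists (grid_factor (D_partner n) (Dfam n)).
  exact: lemma6_prop_grid_factor n_odd (Dfam_cross_family n).
Qed.
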